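(* Let $\mathrm{SG}(n)$ denote the Sprague--Grundy value of a pile of $n$ tokens in the game $i\textsc{-Mark}(\{1\},\{2,3\})$. For every integer $n>3$ there exists an integer $i$ with $1\le i\le 49$ and $i\le n$ such that $\mathrm{SG}(n-i)=2$.
   Context: In the impartial game $i\textsc{-Mark}(\{1\},\{2,3\})$, played on a single pile of $n\ge0$ tokens, a move replaces $n$ by $n-1$ (if $n\ge 1$), or by $n/2$ if $n>0$ is even, or by $n/3$ if $n>0$ is divisible by $3$. The Sprague--Grundy value is defined recursively by $\mathrm{SG}(n)=\mathrm{mex}\{\mathrm{SG}(w): w \text{ an option of } n\}$, where $\mathrm{mex}(T)$ is the smallest nonnegative integer not in $T$. *)

From mathcomp Require Import all_boot.
Set Implicit Arguments. Unset Strict Implicit. Unset Printing Implicit Defensive.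

(* mex of a finite set of naturals (given as a sequence):
   the least m not in s.  Since at most size s values are excluded,
   the answer is among 0 .. size s. *)
Definition mex (s : seq nat) : nat :=
  find (fun m => m \notin s) (iota 0 (size s).+1).

Definition options (n : nat) : seq nat :=
  (if 0 < n then [:: n.-1] else [::]) ++
  (if (0 < n) && (2 %| n) then [:: n %/ 2] else [::]) ++
  (if (0 < n) && (3 %| n) then [:: n %/ 3] else [::]).

(* Sprague-Grundy values by recursion with fuel (all options of n are < n). *)
Fixpoint sg_fuel (fuel n : nat) : nat :=
  match fuel with
  | 0 => 0
  | fuel'.+1 => mex [seq sg_fuel fuel' w | w <- options n]
  end.

Definition SG (n : nat) : nat := sg_fuel n.+1 n.

Lemma SG_rec_check : [seq SG n | n <- iota 0 12] = [seq mex [seq SG w | w <- options n] | n <- iota 0 12].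
Proof. by vm_compute. Qed.

From mathcomp Require Import all_boot zify.
Set Implicit Arguments. Unset Strict Implicit. Unset Printing Implicit Defensive.

(* Small n are read off a table of SG.  For n >= 144 write n = 72 (q + 1) + r
   with q >= 1 and r < 72, and suppose SG (n - i) <> 2 for 1 <= i <= 49.
   A number c q + e with 6 | c has its options described by (c, e) alone:
   c q + (e - 1) when e > 0, and, for k = 2, 3, k | c q + e iff k | e, in which
   case (c q + e) / k = (c / k) q + e / k.  Hence the SG values at the points
   (72 / d) q + e (d = 1, ..., 4, e ranging over the quotients by d of the window
   72 + r - 49, ..., 72 + r - 1) obey a system of mex relations that does not
   depend on q.  For each r, a constraint propagation and case split search,
   proved sound once, shows that no assignment of values in 0..3 avoiding 2 on
   the window satisfies it. *)

Lemma mem_options_lt n w : w \in options n -> w < n.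
Proof.
case: n => [|n] //; rewrite /options /= inE => /orP[/eqP->//|].
by rewrite mem_cat => /orP[]; case: ifP => _; rewrite ?inE // => /eqP->; rewrite ltn_Pdiv.
Qed.

Lemma sg_fuel_stable f g n : n < f -> n < g -> sg_fuel f n = sg_fuel g n.
Proof.
elim: f g n => [|f IH] [|g] n //= n_lt_f n_lt_g.
congr mex; apply/eq_in_map => w /mem_options_lt w_lt_n.
by apply: IH; lia.
Qed.

Lemma SG_mex n : SG n = mex [seq SG w | w <- options n].
Proof.
congr mex; apply/eq_in_map => w /mem_options_lt w_lt_n.
exact: sg_fuel_stable.
Qed.

Lemma has_notin_mex_range s : has (fun m => m \notin s) (iota 0 (size s).+1).
Proof.
apply/hasPn => all_in.
have : size (iota 0 (size s).+1) <= size s.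
  by apply: uniq_leq_size (iota_uniq _ _) _ => m /all_in /negPn.
by rewrite size_iota ltnn.
Qed.

Lemma mex_le_size s : mex s <= size s.
Proof. by have := has_notin_mex_range s; rewrite has_find size_iota. Qed.

Lemma mex_notin s : mex s \notin s.
Proof.
have := nth_find 0 (has_notin_mex_range s).
by rewrite nth_iota ?add0n // ltnS mex_le_size.
Qed.

Lemma SG_lt4 n : SG n < 4.
Proof.
rewrite SG_mex ltnS (leq_trans (mex_le_size _)) // size_map /options.
by case: (0 < n); case: (2 %| n); case: (3 %| n).
Qed.

(* Evaluating [SG] directly takes exponential time; the table is built bottom-up. *)
Fixpoint SG_prefix k : seq nat :=
  if k is k'.+1 then
    let t := SG_prefix k' in rcons t (mex [seq nth 0 t w | w <- options k'])
  else [::].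

Lemma SG_prefixE k : SG_prefix k = [seq SG n | n <- iota 0 k].
Proof.
elim: k => // k IH; rewrite [SG_prefix _]/= IH -addn1 iotaD map_cat cats1 add0n /= SG_mex.
congr (rcons _ (mex _)); apply/eq_in_map => w /mem_options_lt w_lt_k.
by rewrite (nth_map 0) ?size_iota ?nth_iota.
Qed.

Definition hits_2_within (t : seq nat) n :=
  has (fun i => (i <= n) && (nth 0 t (n - i) == 2)) (iota 1 49).

Lemma SG_prefix_hits_2 : all (hits_2_within (SG_prefix 144)) (iota 4 140).
Proof. by vm_compute. Qed.

Lemma SG_hits_2_small n : 3 < n -> n < 144 ->
  exists i : nat, [/\ 1 <= i, i <= 49, i <= n & SG (n - i) = 2].
Proof.
move=> n_gt3 n_lt; have n_in : n \in iota 4 140 by rewrite mem_iota; lia.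
have /hasP [i] := allP SG_prefix_hits_2 n n_in.
rewrite mem_iota SG_prefixE => /andP [i_ge1 i_lt] /andP [i_le_n].
have lt_144 : n - i < 144 by lia.
rewrite (nth_map 0) ?size_iota ?nth_iota // add0n => /eqP SG_2.
by exists i; split => //; lia.
Qed.

Record mex_constraint := MexConstraint { target : nat; known : seq nat; complete : bool }.

Definition mex_tuple_ok (complete : bool) (t : seq nat) : bool :=
  if t is v :: vs then (if complete then v == mex vs else v \notin vs) else true.

Definition scope (c : mex_constraint) := target c :: known c.

Definition satisfies (s : nat -> nat) (c : mex_constraint) :=
  mex_tuple_ok (complete c) (map s (scope c)).

Fixpoint tuples (ls : seq (seq nat)) : seq (seq nat) :=
  if ls is l :: ls' then [seq v :: t | v <- l, t <- tuples ls'] else [:: [::]].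

Section DomainRefutation.

Variable dom0 : seq nat.

Definition dom (ds : seq (seq nat)) i := nth dom0 ds i.

Definition in_doms (s : nat -> nat) ds := forall i, s i \in dom ds i.

Lemma map_in_tuples s ds xs : in_doms s ds -> map s xs \in tuples (map (dom ds) xs).
Proof. by move=> s_in; elim: xs => [|x xs IH] /=; [exact: mem_head | exact: allpairs_f]. Qed.

Definition restrict ds x (P : pred nat) := set_nth dom0 ds x (filter P (dom ds x)).

Lemma restrict_sound s ds x (P : pred nat) :
  in_doms s ds -> P (s x) -> in_doms s (restrict ds x P).
Proof.
move=> s_in Psx i; rewrite /dom /restrict nth_set_nth /=.
by case: eqP => [->|_]; rewrite ?mem_filter ?Psx; apply: s_in.
Qed.

Definition propagate ds c :=
  let sc := scope c in
  let sols := filter (mex_tuple_ok (complete c)) (tuples (map (dom ds) sc)) in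
  foldl (fun ds k => restrict ds (nth 0 sc k) (fun v => has (fun t => nth 0 t k == v) sols))
        ds (iota 0 (size sc)).

Lemma propagate_sound s ds c : in_doms s ds -> satisfies s c -> in_doms s (propagate ds c).
Proof.
move=> s_in sat_c; rewrite /propagate.
set sc := scope c; set sols := filter _ _.
have s_sol : map s sc \in sols by rewrite mem_filter [mex_tuple_ok _ _]sat_c map_in_tuples.
have : {subset iota 0 (size sc) <= gtn (size sc)} by move=> k; rewrite mem_iota.
clearbody sols; elim: (iota _ _) ds s_in => [|k ks IH] ds s_in //= ks_lt.
apply: IH => [|k' k'_in]; last by apply: ks_lt; rewrite inE k'_in orbT.
apply: restrict_sound => //; apply/hasP; exists (map s sc) => //.
by rewrite (nth_map 0) //; apply: ks_lt; rewrite mem_head.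
Qed.

Definition propagate_all ds cs := foldl propagate ds cs.

Lemma propagate_all_sound s ds cs :
  in_doms s ds -> all (satisfies s) cs -> in_doms s (propagate_all ds cs).
Proof.
elim: cs ds => [|c cs IH] ds //= s_in /andP [sat_c sat_cs].
exact/IH/sat_cs/propagate_sound.
Qed.

Fixpoint refute fuel ds cs : bool :=
  if fuel is fuel'.+1 then
    let ds := propagate_all ds cs in
    (* not [||]: its second argument would be evaluated eagerly by [vm_compute] *)
    if [::] \in ds then true else
    if [seq i <- iota 0 (size ds) | 1 < size (dom ds i)] is i :: _ then
      all (fun v => refute fuel' (set_nth dom0 ds i [:: v]) cs) (dom ds i)
    else false
  else false.

Lemma refute_sound s fuel ds cs :
  refute fuel ds cs -> in_doms s ds -> ~~ all (satisfies s) cs.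
Proof.
elim: fuel ds => [|fuel IH] ds //=.
set ds' := propagate_all ds cs => refuted s_in; apply/negP => sat_cs.
have s_in' : in_doms s ds' by apply: propagate_all_sound.
case: ifP refuted => [empty_in _|_].
  by have := s_in' (index [::] ds'); rewrite /dom nth_index.
case: [seq _ <- _ | _] => [//|i _] /allP /(_ (s i) (s_in' i)) refuted.
suff /(IH _ refuted) : in_doms s (set_nth dom0 ds' i [:: s i]) by rewrite sat_cs.
move=> j; rewrite /dom nth_set_nth /=.
by case: eqP => [->|_]; [exact: mem_head | exact: s_in'].
Qed.

End DomainRefutation.

Definition at_q q (p : nat * nat) := p.1 * q + p.2.

Definition sym_pred (p : nat * nat) : seq (nat * nat) * bool :=
  if 0 < p.2 then ([:: (p.1, p.2.-1)], true) else ([::], false).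

Definition sym_div k (p : nat * nat) : seq (nat * nat) * bool :=
  if k %| p.1 then (if k %| p.2 then [:: (p.1 %/ k, p.2 %/ k)] else [::], true)
  else ([::], false).

Definition sym_options (p : nat * nat) : seq (nat * nat) * bool :=
  ((sym_pred p).1 ++ (sym_div 2 p).1 ++ (sym_div 3 p).1,
   [&& (sym_pred p).2, (sym_div 2 p).2 & (sym_div 3 p).2]).

Definition describes q (a : seq (nat * nat) * bool) (ws : seq nat) :=
  {subset map (at_q q) a.1 <= ws} /\ (a.2 -> map (at_q q) a.1 = ws).

Lemma describes_cat q a b ws vs :
  describes q a ws -> describes q b vs -> describes q (a.1 ++ b.1, a.2 && b.2) (ws ++ vs).
Proof.
move=> [a_sub a_eq] [b_sub b_eq]; split => [w|/andP [/a_eq <- /b_eq <-]] /=.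
  by rewrite map_cat !mem_cat => /orP [/a_sub -> | /b_sub ->]; rewrite ?orbT.
by rewrite map_cat.
Qed.

Lemma describes_pred q p : describes q (sym_pred p) [:: (at_q q p).-1].
Proof.
case: p => c e; rewrite /sym_pred /at_q /=; case: e => [//|e].
by rewrite addnS; split.
Qed.

Lemma describes_div q k p :
  describes q (sym_div k p) (if k %| at_q q p then [:: at_q q p %/ k] else [::]).
Proof.
rewrite /sym_div /at_q; case: ifP => [k_dvd_c|//].
have k_dvd_cq : k %| p.1 * q by rewrite dvdn_mulr.
rewrite dvdn_addr //; case: ifP => [k_dvd_e|_]; last by split.
by rewrite divnDl // -divn_mulAC //; split.
Qed.

Lemma describes_options q p : 0 < at_q q p -> describes q (sym_options p) (options (at_q q p)).
Proof.
move=> pos; rewrite /options pos /= -cat1s.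
apply: (describes_cat (b := (_ ++ _, _ && _))); first exact: describes_pred.
by apply: describes_cat; apply: describes_div.
Qed.

Definition constraint_at (ps : seq (nat * nat)) i : mex_constraint :=
  let a := sym_options (nth (0, 0) ps i) in
  MexConstraint i [seq index p ps | p <- a.1 & p \in ps] (a.2 && all (mem ps) a.1).

Definition SG_at q (ps : seq (nat * nat)) j := SG (at_q q (nth (0, 0) ps j)).

Lemma constraint_at_sound q ps i :
  0 < at_q q (nth (0, 0) ps i) -> satisfies (SG_at q ps) (constraint_at ps i).
Proof.
rewrite /satisfies /constraint_at /SG_at; set p := nth _ ps i; set a := sym_options p.
move=> pos; have [sub eq] := describes_options pos; rewrite /= -/p SG_mex.
have -> : [seq SG (at_q q (nth (0, 0) ps j)) | j <- [seq index p' ps | p' <- a.1 & p' \in ps]]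
          = [seq SG w | w <- map (at_q q) [seq p' <- a.1 | p' \in ps]].
  rewrite -!map_comp; apply/eq_in_map => p'; rewrite mem_filter => /andP [p'_in _].
  by rewrite /= nth_index.
case: ifP => [/andP [/eq <- /all_filterP ->] //|_].
apply: contra (mex_notin [seq SG w | w <- options (at_q q p)]).
move=> /mapP [_ /mapP [p' /[!mem_filter] /andP [_ p'_in_a] ->] ->].
by rewrite map_f // sub // map_f.
Qed.

(* With n = 72 (q + 1) + r, the entry (72, e) of the window stands for n - i with
   i = 72 + r - e in [1, 49]; level d holds the quotients by d of the window. *)
Definition positions r : seq (nat * nat) :=
  flatten [seq [seq (72 %/ d, e) | e <- index_iota ((r + 23) %/ d) ((r + 71) %/ d).+1]
          | d <- [:: 1; 2; 3; 4]].

Definition in_window r (p : nat * nat) := (p.1 == 72) && (r + 23 <= p.2 <= r + 71).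

Definition initial_doms r : seq (seq nat) :=
  [seq if in_window r p then [seq v <- iota 0 4 | v != 2] else iota 0 4 | p <- positions r].

Definition residue_constraints r := map (constraint_at (positions r)) (iota 0 (size (positions r))).

Lemma residues_refuted :
  all (fun r => refute (iota 0 4) (size (positions r)).+1 (initial_doms r) (residue_constraints r))
      (iota 0 72).
Proof. by vm_compute. Qed.

Lemma positions_pos r p : p \in positions r -> 0 < p.1.
Proof. by case/flattenP => _ /mapP [d /[!inE] /or4P [] /eqP -> ->] /mapP [e _ ->]. Qed.

Lemma SG_hits_2_large n : 144 <= n ->
  exists i : nat, [/\ 1 <= i, i <= 49, i <= n & SG (n - i) = 2].
Proof.
move=> n_ge; have [|no_2] := boolP (has (fun i => SG (n - i) == 2) (iota 1 49)).
  by case/hasP => i /[!mem_iota] /andP [i_ge1 i_lt] /eqP SG_2; exists i; split => //; lia.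
exfalso; set r := n %% 72; set q := n %/ 72 - 1; set ps := positions r.
have r_lt : r < 72 by rewrite ltn_mod.
have n_eq : n = 72 * q + 72 + r by have := divn_eq n 72; lia.
have q_gt0 : 0 < q by lia.
have doms_ok : in_doms (iota 0 4) (SG_at q ps) (initial_doms r).
  move=> j; rewrite /dom /initial_doms.
  have SG_in m : SG m \in iota 0 4 by rewrite mem_iota SG_lt4.
  case: (ltnP j (size ps)) => [j_lt|j_ge]; last by rewrite nth_default ?size_map //; apply: SG_in.
  rewrite (nth_map (0, 0)) //; case: ifP => [|_]; last exact: SG_in.
  rewrite mem_filter SG_in andbT /SG_at /at_q.
  case: (nth _ ps j) => c e /andP [/eqP /= -> /andP [e_ge e_le]] /=.
  apply/eqP => SG_2; case/hasP: no_2; exists (72 + r - e); first by rewrite mem_iota; lia.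
  by rewrite -SG_2; apply/eqP; congr SG; lia.
have sat : all (satisfies (SG_at q ps)) (residue_constraints r).
  rewrite all_map; apply/allP => i /[!mem_iota] /andP [_ i_lt]; apply: constraint_at_sound.
  by rewrite /at_q addn_gt0 muln_gt0 q_gt0 (positions_pos (mem_nth _ i_lt)).
have := refute_sound (allP residues_refuted r _) doms_ok.
by rewrite sat mem_iota r_lt => /(_ isT).
Qed.

Theorem mainTheorem6 :
  forall n : nat, 3 < n ->
    exists i : nat, [/\ 1 <= i, i <= 49, i <= n & SG (n - i) = 2].
Proof.
move=> n n_gt3; case: (ltnP n 144) => [n_lt | n_ge].
  exact: SG_hits_2_small.
exact: SG_hits_2_large.
Qed.
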